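(* Let $(\mathbf M,\mathfrak I)$ be a ranked merge-model and let $\mathfrak C$ be the cleaning of $\mathfrak I$. Then for every positive integer $r$, $\mathrm w_r(\mathbf M,\mathfrak C)\le\mathrm w_r(\mathbf M,\mathfrak I)$.
   Context: Conventions. $\sigma$ is a finite set of binary relation symbols. $(V)_2=\{(u,v)\in V^2:u\ne v\}$. A tree-order is a partial order $\preceq$ with least element (root) such that elements below any element form a chain; maximal elements are leaves; $\pi(x)$ is the parent of non-root $x$; $x\parallel y$ = incomparable. For pairs, $(x,y)\preceq(x',y')$ iff $x\preceq x'$ and $y\preceq y'$; $\prec$ = $\preceq$ and distinct. Merge-models: $\sigma^*=\{\preceq\}\cup\{S_{Z,\alpha}:Z\in\sigma,\alpha\in\{0,1\}\}$, $S_Z=S_{Z,0}\cup S_{Z,1}$, $S=\bigcup_Z S_Z$. A merge-model is a finite $\sigma^*$-structure $\mathbf M$ with: (1) $\preceq$ a tree-order, root $\rho(\mathbf M)$, leaves $V(\mathbf M)$; (2) $S(x,y)\Rightarrow x=y$ or $x\parallel y$; (3) no $(x,y)\prec(x',y')$ with $S(x,y')$ and $S(x',y)$; (4) never both $S_{Z,0}(x,y)$ and $S_{Z,1}(x,y)$; (5) for all $Z$ and $(u,v)\in(V(\mathbf M))_2$ some $(x,y)\preceq(u,v)$ has $S_Z(x,y)$. Interval ranking: map $\mathfrak I$ from the domain to closed real intervals with $x\prec y\Rightarrow\max\mathfrak I(y)<\min\mathfrak I(x)$ and $S(x,y)\Rightarrow\mathfrak I(x)\cap\mathfrak I(y)\ne\emptyset$;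 $(\mathbf M,\mathfrak I)$ is a ranked merge-model. Cleaning: $f(x)=\min\mathfrak I(x)$ if $x$ is not a leaf, $f(x)=\min_{y\in V(\mathbf M)}\min\mathfrak I(y)$ if $x$ is a leaf; $g(x)=|\{f(y):y\in M, f(y)\le f(x)\}|$; $\mathfrak C(\rho(\mathbf M))=[g(\rho(\mathbf M)),g(\rho(\mathbf M))]$, $\mathfrak C(x)=[g(x),g(\pi(x))-1]$ otherwise. Merge-walks: for real $\tau<\min\mathfrak I(\rho(\mathbf M))$, a $\tau$-bounded merge-walk of order $n$ is $(u_0,v_1,u_1,\dots,v_n,u_n,v_{n+1})$ with $u_0$ a leaf; $u_{i-1},v_i$ comparable or equal ($1\le i\le n+1$); $S(v_i,u_i)$ and $\max(\mathfrak I(u_i)\cap\mathfrak I(v_i))\le\tau$ ($1\le i\le n$); $\min\mathfrak I(v_{n+1})\le\tau<\min\mathfrak I(\pi(v_{n+1}))$. $\mathrm{MWReach}_r(v,\tau)$ = set of such $v_{n+1}$ with $u_0=v$, $n\le r$; $\mathrm w_r(\mathbf M,\mathfrak I)=\max_\tau\max_{v\in V(\mathbf M)}|\mathrm{MWReach}_r(v,\tau)|$. *)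

From HB Require Import structures.
From mathcomp Require Import all_boot all_order all_algebra.
From mathcomp Require Import boolp reals.
Set Implicit Arguments. Unset Strict Implicit. Unset Printing Implicit Defensive.
Import Order.TTheory GRing.Theory Num.Theory.
Local Open Scope ring_scope.

Section MergeModels.
(* T : the (finite) domain of the merge-model; Sig : the finite signature sigma.
   le : the tree-order; S2 Zs a : the relation S_{Zs,a} (a : bool = alpha in {0,1}). *)
Context {T Sig : finType} (le : rel T) (S2 : Sig -> bool -> rel T).

Definition tlt (x y : T) : bool := le x y && (x != y).
Definition incomp (x y : T) : bool := ~~ le x y && ~~ le y x.
Definition is_root (r : T) : Prop := forall y, le r y.
Definition is_leaf (x : T) : Prop := forall y, le x y -> y = x.
Definition is_parent (p x : T) : Prop := tlt p x /\ forall y, tlt y x -> le y p.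
Definition parent_of (x : T) : option T := [pick p | `[< is_parent p x >]].

Definition tree_order : Prop :=
  [/\ reflexive le, antisymmetric le, transitive le,
      exists r, is_root r
    & forall x y z, le y x -> le z x -> le y z \/ le z y].

Definition SZ (Zs : Sig) (x y : T) : bool := S2 Zs false x y || S2 Zs true x y.
Definition S (x y : T) : bool := [exists Zs, SZ Zs x y].

Definition pair_le (a b : T * T) : bool := le a.1 b.1 && le a.2 b.2.
Definition pair_lt (a b : T * T) : bool := pair_le a b && (a != b).

Definition merge_model : Prop :=
  [/\ tree_order,
      (forall x y, S x y -> x = y \/ incomp x y),
      ~ (exists x y x' y', pair_lt (x, y) (x', y') /\ S x y' /\ S x' y),
      (forall Zs x y, ~ (S2 Zs false x y /\ S2 Zs true x y))
    & (forall Zs u v, is_leaf u -> is_leaf v -> u != v ->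
         exists x y, pair_le (x, y) (u, v) /\ SZ Zs x y)].

Context {R : realType}.
(* a closed real interval [a,b] is the pair (a,b), with a <= b *)
Definition interval_ranking (I : T -> R * R) : Prop :=
  [/\ (forall x, (I x).1 <= (I x).2),
      (forall x y, tlt x y -> (I y).2 < (I x).1)
    & (forall x y, S x y -> exists t,
         ((I x).1 <= t <= (I x).2) /\ ((I y).1 <= t <= (I y).2))].

Definition f_clean (I : T -> R * R) (x : T) : R :=
  if `[< is_leaf x >]
  then \big[Num.min/(I x).1]_(y | `[< is_leaf y >]) (I y).1
  else (I x).1.
Definition g_clean (I : T -> R * R) (x : T) : nat :=
  size (undup [seq f_clean I y | y <- enum T & f_clean I y <= f_clean I x]).
Definition cleaning (I : T -> R * R) (x : T) : R * R :=
  match parent_of x with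
  | Some p => ((g_clean I x)%:R, (g_clean I p)%:R - 1)
  | None => ((g_clean I x)%:R, (g_clean I x)%:R)
  end.

(* max of the intersection of two (intersecting) closed intervals *)
Definition capmax (a b : R * R) : R := Num.min a.2 b.2.

(* tau-bounded merge-walk (u_0, v_1, u_1, ..., v_n, u_n, v_{n+1}) of order n;
   only u 0..n and v 1..n+1 are relevant *)
Definition merge_walk (I : T -> R * R) (tau : R) (n : nat) (u v : nat -> T) : Prop :=
  [/\ exists rt, is_root rt /\ tau < (I rt).1,
      is_leaf (u 0%N),
      (forall i, (1 <= i <= n.+1)%N -> le (u i.-1) (v i) || le (v i) (u i.-1)),
      (forall i, (1 <= i <= n)%N -> S (v i) (u i) /\ capmax (I (u i)) (I (v i)) <= tau)
    & (I (v n.+1)).1 <= tau /\ exists p, is_parent p (v n.+1) /\ tau < (I p).1].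

Definition MWReach (r : nat) (I : T -> R * R) (x : T) (tau : R) : {set T} :=
  [set w | `[< exists n u v, (n <= r)%N /\ u 0%N = x /\ merge_walk I tau n u v
                              /\ v n.+1 = w >]].

Definition w_r (r : nat) (I : T -> R * R) : nat :=
  \max_(k < #|T|.+1 | `[< exists tau x, is_leaf x
                            /\ (exists rt, is_root rt /\ tau < (I rt).1)
                            /\ #|MWReach r I x tau| = k >]) k.

End MergeModels.

From HB Require Import structures.
From mathcomp Require Import all_boot all_order all_algebra.
From mathcomp Require Import boolp reals.
Set Implicit Arguments. Unset Strict Implicit. Unset Printing Implicit Defensive.
Import Order.TTheory GRing.Theory Num.Theory.
Local Open Scope ring_scope.

(* Fix tau below the cleaned rank of the root and let b minimise f among the
   vertices whose cleaned rank exceeds tau.  With theta := f b, a vertex has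
   cleaned rank at most tau exactly when its f-value is below theta.  Hence a
   cleaned merge-walk bounded by tau only involves original left endpoints
   below theta, and at each S-step an original right endpoint below theta.
   If the starting leaf x has (I x).1 < theta, every such walk is an original
   merge-walk bounded by the largest endpoint below theta.  Otherwise every
   walk has order 0 and ends at the unique ancestor of x whose cleaned rank is
   at most tau while that of its parent is not; that single vertex is also
   reached by an original walk of order 0. *)

Section TreeOrder.
Variables (T : finType) (le : rel T).

Lemma tlt_not_leaf p y : tlt le p y -> ~ is_leaf le p.
Proof. by case/andP=> le_py ne_py /(_ y le_py) eq_yp; rewrite eq_yp eqxx in ne_py. Qed.

Lemma parent_ofS x p : parent_of le x = Some p -> is_parent le p x.
Proof. by rewrite /parent_of; case: pickP => // q /asboolP q_par [<-]. Qed.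

Hypothesis tree : tree_order le.

Lemma tree_refl : reflexive le. Proof. by case: tree. Qed.
Lemma tree_trans : transitive le. Proof. by case: tree. Qed.
Lemma tree_root : exists rt, is_root le rt. Proof. by case: tree. Qed.
Lemma tree_chain x y z : le y x -> le z x -> le y z \/ le z y.
Proof. by case: tree => _ _ _ _; apply. Qed.

Lemma leaf_comparable x y : is_leaf le x -> le y x || le x y -> le y x.
Proof. by move=> leaf_x /orP [//|/leaf_x ->]; apply: tree_refl. Qed.

(* The parent is the strict ancestor with the most elements below it. *)
Lemma exists_parent x : ~ is_root le x -> exists p, is_parent le p x.
Proof.
move=> not_root; have [rt root_rt] := tree_root.
have rt_lt_x : tlt le rt x.
  by rewrite /tlt root_rt; apply/eqP=> rt_x; apply: not_root; rewrite -rt_x.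
pose size_below p := #|[set y | le y p]|.
case: (arg_maxnP (P := tlt le^~ x) size_below rt_lt_x) => p p_lt_x p_max.
exists p; split=> // y y_lt_x.
have [//|le_py] := tree_chain (proj1 (andP y_lt_x)) (proj1 (andP p_lt_x)).
apply: contraTT (p_max y y_lt_x) => not_le_yp; rewrite -ltnNge.
apply: proper_card; apply/properP; split.
  by apply/subsetP=> z; rewrite !inE => le_zp; apply: tree_trans le_zp le_py.
by exists y; rewrite !inE ?tree_refl.
Qed.

Lemma parent_ofN x : parent_of le x = None -> is_root le x.
Proof.
rewrite /parent_of; case: pickP => // no_parent _.
case: (pselect (is_root le x)) => // /exists_parent [p /asboolP].
by rewrite no_parent.
Qed.

End TreeOrder.

Section MaxBelow.
Variables (d : Order.disp_t) (X : orderType d).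

Lemma exists_max_below (s : seq X) (x0 h : X) : (x0 < h)%O ->
  exists2 t, (t < h)%O & forall a, a \in s -> (a < h)%O -> (a <= t)%O.
Proof.
move=> x0_h; exists (\big[Order.max/x0]_(a <- s | (a < h)%O) a).
  exact: bigmax_lt.
move=> a a_s a_h.
exact: (le_bigmax_seq x0 a (fun c => (c < h)%O) (fun c => c) a_s a_h).
Qed.

End MaxBelow.

Section MergeWalks.
Variables (R : realType) (T Sig : finType) (le : rel T) (S2 : Sig -> bool -> rel T).

Lemma MWReach_order0 (J : T -> R * R) r (tau : R) x w p :
  (exists rt, is_root le rt /\ tau < (J rt).1) -> is_leaf le x -> le w x ->
  is_parent le p w -> (J w).1 <= tau < (J p).1 -> w \in MWReach le S2 r J x tau.
Proof.
move=> root_tau leaf_x le_wx p_par /andP [w_tau tau_p]; rewrite inE; apply/asboolP.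
exists 0%N, (fun=> x), (fun=> w); do 3 split=> //.
split=> // [i _|i /andP [i_pos i_le0]|]; first by rewrite le_wx orbT.
  by move: (leq_trans i_pos i_le0).
by split=> //; exists p.
Qed.

Lemma w_r_le r (I J : T -> R * R) :
  (forall tau x, is_leaf le x -> (exists rt, is_root le rt /\ tau < (J rt).1) ->
     (0 < #|MWReach le S2 r J x tau|)%N ->
     exists tau' x', [/\ is_leaf le x', (exists rt, is_root le rt /\ tau' < (I rt).1)
       & (#|MWReach le S2 r J x tau| <= #|MWReach le S2 r I x' tau'|)%N]) ->
  (w_r le S2 r J <= w_r le S2 r I)%N.
Proof.
move=> dominated; apply/bigmax_leqP => k /asboolP [tau [x [leaf_x [root_tau <-]]]].
case: (posnP #|MWReach le S2 r J x tau|) => [-> //|reach_pos].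
have [tau' [x' [leaf_x' root_tau' card_le]]] := dominated _ _ leaf_x root_tau reach_pos.
apply: leq_trans card_le _.
have card_lt : (#|MWReach le S2 r I x' tau'| < #|T|.+1)%N by rewrite ltnS max_card.
rewrite -[X in (X <= _)%N]/(nat_of_ord (Ordinal card_lt)).
apply: (leq_bigmax_cond (F := fun k : 'I_#|T|.+1 => nat_of_ord k)).
by apply/asboolP; exists tau', x'.
Qed.

End MergeWalks.

Section Cleaning.
Variables (R : realType) (T Sig : finType) (le : rel T) (S2 : Sig -> bool -> rel T).
Variable I : T -> R * R.

Local Notation f := (f_clean le I).
Local Notation g := (g_clean le I).
Local Notation C := (cleaning le I).

Lemma f_clean_le_fst x : f x <= (I x).1.
Proof.
rewrite /f_clean; case: ifP => // _.
by elim/big_rec: _ => // y m _ m_le; rewrite ge_min m_le orbT.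
Qed.

Lemma f_clean_nonleaf x : ~ is_leaf le x -> f x = (I x).1.
Proof. by rewrite /f_clean; case: asboolP. Qed.

Lemma g_clean_le a b : f a <= f b -> (g a <= g b)%N.
Proof.
move=> fab; apply: uniq_leq_size; first exact: undup_uniq.
move=> z; rewrite !mem_undup => /mapP [y]; rewrite mem_filter => /andP [fya y_T] ->.
by apply/mapP; exists y => //; rewrite mem_filter y_T (le_trans fya fab).
Qed.

Lemma g_clean_lt a b : f a < f b -> (g a < g b)%N.
Proof.
move=> fab; rewrite /g_clean -[X in (X <= _)%N]/(size (f b :: _)).
apply: uniq_leq_size.
  rewrite /= undup_uniq andbT mem_undup; apply/mapP=> [[y]].
  by rewrite mem_filter => /andP [fya _] fby; move: (le_lt_trans fya fab); rewrite -fby ltxx.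
move=> z; rewrite inE !mem_undup => /orP [/eqP ->|/mapP [y]].
  by apply/mapP; exists b; rewrite // mem_filter lexx mem_enum.
rewrite mem_filter => /andP [fya y_T] ->; apply/mapP; exists y => //.
by rewrite mem_filter y_T (le_trans fya (ltW fab)).
Qed.

Lemma cleaning_fst x : (C x).1 = (g x)%:R.
Proof. by rewrite /cleaning; case: parent_of. Qed.

Lemma exists_cut (tau : R) : (exists z, tau < (g z)%:R) ->
  exists b, forall z, ((g z)%:R <= tau) = (f z < f b).
Proof.
move=> [z0 z0_tau].
case: (arg_minP (P := fun z => tau < (g z)%:R) f z0_tau) => b b_tau b_min.
exists b => z; apply/idP/idP => [gz_tau|fzb].
  rewrite ltNge; apply/negP=> /g_clean_le; rewrite -(ler_nat R) => gbz.
  by move: (lt_le_trans b_tau (le_trans gbz gz_tau)); rewrite ltxx.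
by rewrite leNgt; apply/negP=> /b_min; rewrite leNgt fzb.
Qed.

Hypothesis ranking : interval_ranking le S2 I.

Lemma ranking_fst_le_snd x : (I x).1 <= (I x).2.
Proof. by case: ranking. Qed.

Lemma ranking_lt x y : tlt le x y -> (I y).2 < (I x).1.
Proof. by case: ranking => _ + _; apply. Qed.

Lemma ranking_meet x y : S S2 x y ->
  exists t, ((I x).1 <= t <= (I x).2) /\ ((I y).1 <= t <= (I y).2).
Proof. by case: ranking => _ _; apply. Qed.

Lemma ranking_fst_lt x y : tlt le x y -> (I y).1 < (I x).1.
Proof. by move=> /ranking_lt; apply: le_lt_trans (ranking_fst_le_snd y). Qed.

Lemma ranking_fst_anti a b : le a b -> (I b).1 <= (I a).1.
Proof.
move=> le_ab; case: (eqVneq a b) => [->//|ne_ab].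
by apply/ltW/ranking_fst_lt; rewrite /tlt le_ab ne_ab.
Qed.

Lemma f_clean_anti a b : le a b -> f b <= f a.
Proof.
move=> le_ab; case: (eqVneq a b) => [->//|ne_ab].
have a_lt_b : tlt le a b by rewrite /tlt le_ab ne_ab.
rewrite (f_clean_nonleaf (tlt_not_leaf a_lt_b)).
exact: le_trans (f_clean_le_fst b) (ranking_fst_anti le_ab).
Qed.

Hypothesis tree : tree_order le.

Lemma cut_ancestor_unique (tau : R) a a' p : le a a' -> (g a)%:R <= tau ->
  is_parent le p a' -> tau < (g p)%:R -> a = a'.
Proof.
move=> le_aa' ga_tau [_ below_p] tau_gp; case: (eqVneq a a') => // ne_aa'.
have le_ap : le a p by apply: below_p; rewrite /tlt le_aa' ne_aa'.
move: (g_clean_le (f_clean_anti le_ap)); rewrite -(ler_nat R) => gpa.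
by move: (lt_le_trans tau_gp (le_trans gpa ga_tau)); rewrite ltxx.
Qed.

Section Cut.
Variables (tau : R) (b : T).
Hypothesis cut : forall z, ((g z)%:R <= tau) = (f z < f b).

Lemma cut_gt : tau < (g b)%:R.
Proof. by rewrite ltNge cut ltxx. Qed.

Lemma cut_fst_above z : tau < (g z)%:R -> f b <= (I z).1.
Proof. by rewrite ltNge cut -leNgt => /le_trans; apply; apply: f_clean_le_fst. Qed.

Lemma cleaning_snd_below y : (C y).2 <= tau -> (I y).2 < f b.
Proof.
rewrite /cleaning; case E: (parent_of le y) => [p|] /= y_tau.
  have [p_lt_y _] := parent_ofS E.
  have fpb : f p <= f b.
    rewrite leNgt; apply/negP=> /g_clean_lt gbp.
    have : (g b)%:R + 1 <= (g p)%:R :> R by rewrite natr1 ler_nat.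
    rewrite -lerBrDr => /le_trans /(_ y_tau).
    by rewrite leNgt cut_gt.
  rewrite (f_clean_nonleaf (tlt_not_leaf p_lt_y)) in fpb.
  exact: lt_le_trans (ranking_lt p_lt_y) fpb.
move: y_tau; rewrite cut => fyb.
by move: (lt_le_trans fyb (f_clean_anti (parent_ofN tree E b))); rewrite ltxx.
Qed.

(* One of the two cleaned intervals lies below tau, so one original interval
   lies below theta, and the other meets it. *)
Lemma meet_below_cut x y : S S2 y x -> capmax (C x) (C y) <= tau ->
  [/\ (I x).1 < f b, (I y).1 < f b & capmax (I x) (I y) < f b].
Proof.
move=> /ranking_meet [t [/andP [y1t ty2] /andP [x1t tx2]]].
rewrite /capmax ge_min gt_min => /orP [] /cleaning_snd_below low; rewrite low ?orbT.
  split=> //; first exact: le_lt_trans (ranking_fst_le_snd x) low.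
  exact: le_lt_trans (le_trans y1t tx2) low.
split=> //; last exact: le_lt_trans (ranking_fst_le_snd y) low.
exact: le_lt_trans (le_trans x1t ty2) low.
Qed.

Lemma walk_end_below n u v : merge_walk le S2 C tau n u v ->
  (I (u 0%N)).1 < f b -> (I (v n.+1)).1 < f b.
Proof.
case=> _ _ comp steps [end_tau _] u0_low; rewrite cleaning_fst cut in end_tau.
have un_low : (I (u n)).1 < f b.
  case: n {comp end_tau} steps => // n steps.
  have := steps n.+1; rewrite leqnn => /(_ isT) [S_vu cap].
  by case: (meet_below_cut S_vu cap).
case: (pselect (is_leaf le (v n.+1))) => [leaf_v|/f_clean_nonleaf <- //].
have le_uv : le (u n) (v n.+1).
  by apply: (leaf_comparable tree leaf_v); apply: (comp n.+1); rewrite leqnn.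
exact: le_lt_trans (ranking_fst_anti le_uv) un_low.
Qed.

Lemma MWReach_cleaning_sub r x t : (I x).1 < f b -> t < f b ->
  (forall y, (I y).1 < f b -> (I y).1 <= t) ->
  (forall y, (I y).2 < f b -> (I y).2 <= t) ->
  MWReach le S2 r C x tau \subset MWReach le S2 r I x t.
Proof.
move=> x_low t_lt fst_t snd_t; apply/subsetP=> w; rewrite !inE.
move=> /asboolP [n [u [v [le_nr [u0 [walk vw]]]]]].
apply/asboolP; exists n, u, v; do 3 split=> //.
have [[rt [root_rt rt_tau]] leaf_u0 comp steps [_ [p [p_par p_tau]]]] := walk.
rewrite !cleaning_fst in rt_tau p_tau.
split=> //.
- by exists rt; split=> //; apply: lt_le_trans t_lt (cut_fst_above rt_tau).
- move=> i i_n; have [S_vu cap] := steps i i_n; split=> //.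
  have [_ _] := meet_below_cut S_vu cap.
  by rewrite /capmax gt_min ge_min => /orP [] /snd_t ->; rewrite ?orbT.
- split; first by apply/fst_t/(walk_end_below walk); rewrite u0.
  by exists p; split=> //; apply: lt_le_trans t_lt (cut_fst_above p_tau).
Qed.

Lemma walk_from_high_leaf n u v : merge_walk le S2 C tau n u v ->
  f b <= (I (u 0%N)).1 -> n = 0%N /\ le (v 1%N) (u 0%N).
Proof.
case=> _ leaf_u0 comp steps _ high.
have le_vu : le (v 1%N) (u 0%N).
  by apply: (leaf_comparable tree leaf_u0); rewrite orbC; exact: (comp 1%N).
split=> //; case: n comp steps => // n _ steps.
have [S_vu cap] := steps 1%N isT.
have [_ v1_low _] := meet_below_cut S_vu cap.
by move: (le_lt_trans (ranking_fst_anti le_vu) v1_low); rewrite ltNge high.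
Qed.

Lemma MWReach_cleaning_high r x w : f b <= (I x).1 ->
  w \in MWReach le S2 r C x tau ->
  exists p, [/\ le w x, (g w)%:R <= tau, is_parent le p w & tau < (g p)%:R].
Proof.
move=> high; rewrite inE => /asboolP [n [u [v [_ [u0 [walk <-]]]]]]; subst x.
have [n0 le_vu] := walk_from_high_leaf walk high; subst n.
case: walk => _ _ _ _ [end_tau [p [p_par p_tau]]].
by exists p; rewrite -!cleaning_fst.
Qed.

Lemma card_MWReach_cleaning_high r x : f b <= (I x).1 ->
  (#|MWReach le S2 r C x tau| <= 1)%N.
Proof.
move=> high; apply/card_le1_eqP=> w w'.
move=> /(MWReach_cleaning_high high) [p [le_wx w_tau p_par p_tau]].
move=> /(MWReach_cleaning_high high) [p' [le_w'x w'_tau p'_par p'_tau]].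
case: (tree_chain tree le_wx le_w'x) => [le_ww'|le_w'w].
  by apply/esym/(cut_ancestor_unique le_ww' w_tau p'_par).
exact: cut_ancestor_unique le_w'w w'_tau p_par p_tau.
Qed.

End Cut.

Lemma MWReach_cleaning_dominated r (tau : R) x : is_leaf le x ->
  (exists rt, is_root le rt /\ tau < (C rt).1) -> (0 < #|MWReach le S2 r C x tau|)%N ->
  exists tau' x', [/\ is_leaf le x', (exists rt, is_root le rt /\ tau' < (I rt).1)
    & (#|MWReach le S2 r C x tau| <= #|MWReach le S2 r I x' tau'|)%N].
Proof.
move=> leaf_x [rt [root_rt rt_tau]] /card_gt0P [w w_in]; rewrite cleaning_fst in rt_tau.
have [b cut] := exists_cut (ex_intro _ rt rt_tau).
case: (ltP (I x).1 (f b)) => [x_low|x_high].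
  pose endpoints := [seq (I y).1 | y <- enum T] ++ [seq (I y).2 | y <- enum T].
  have [t t_lt t_max] := exists_max_below endpoints x_low.
  exists t, x; split=> //.
    by exists rt; split=> //; apply: lt_le_trans t_lt (cut_fst_above cut rt_tau).
  have [fst_in snd_in] :
      (forall y, (I y).1 \in endpoints) /\ (forall y, (I y).2 \in endpoints).
    split=> y; rewrite mem_cat; [apply/orP; left|apply/orP; right];
      by apply/mapP; exists y; rewrite ?mem_enum.
  apply/subset_leq_card/MWReach_cleaning_sub => // y; apply: t_max;
    [exact: fst_in|exact: snd_in].
have [p [le_wx _ p_par _]] := MWReach_cleaning_high cut x_high w_in.
have w_p := ranking_fst_lt (proj1 p_par).
have root_w : exists rt, is_root le rt /\ (I w).1 < (I rt).1.
  by exists rt; split=> //; apply: lt_le_trans w_p (ranking_fst_anti (root_rt p)).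
exists (I w).1, x; split=> //.
apply: leq_trans (card_MWReach_cleaning_high cut r x_high) _.
rewrite card_gt0; apply/set0Pn; exists w.
by apply: (MWReach_order0 S2 r root_w leaf_x le_wx p_par); rewrite lexx w_p.
Qed.

End Cleaning.

Theorem lemma5p5 (R : realType) (T Sig : finType) (le : rel T)
  (S2 : Sig -> bool -> rel T) (I : T -> R * R) :
  merge_model le S2 -> interval_ranking le S2 I ->
  forall r : nat, (0 < r)%N ->
  (w_r le S2 r (cleaning le I) <= w_r le S2 r I)%N.
Proof.
move=> [tree _ _ _ _] ranking r _; apply: w_r_le => tau x.
exact: MWReach_cleaning_dominated.
Qed.
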